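(* For each $k\in\mathbb N$, the class $\mathcal P_k$ is inner-product compatible: for all $\boldsymbol R,\boldsymbol S\in\mathcal P_k$ there exists $\boldsymbol Q\in\mathcal P_k$ such that the graph $\mathrm{tr}(\boldsymbol R^*\cdot\boldsymbol S)$ equals the underlying unlabelled graph of $\boldsymbol Q$.
   Context: A $(k,k)$-bilabelled graph is $\boldsymbol F=(F,\boldsymbol u,\boldsymbol v)$ with $\boldsymbol u,\boldsymbol v\in V(F)^k$; $F$ is its underlying graph. $\boldsymbol F^*=(F,\boldsymbol v,\boldsymbol u)$. $\mathrm{tr}(\boldsymbol F)$ is the unlabelled graph obtained from $F$ by identifying $u_i$ with $v_i$ for all $i$. Series composition $\boldsymbol F\cdot\boldsymbol F'$: disjoint union with $v_i$ identified with $u'_i$, multiple edges removed, labels $(\boldsymbol u,\boldsymbol v')$. Parallel composition $\boldsymbol F\odot\boldsymbol F'$: identify $u_i$ with $u'_i$ and $v_i$ with $v'_i$, multiple edges removed. For $\sigma\in\mathfrak S_{2k}$, $\boldsymbol F^\sigma$ has in-labels $(w_{\sigma(1)},\dots,w_{\sigma(k)})$ and out-labels $(w_{\sigma(k+1)},\dots,w_{\sigma(2k)})$, $\boldsymbol w=(u_1,\dots,u_k,v_1,\dots,v_k)$. $\mathscr C_k$ = cyclic group of rotations of the cyclic sequence $(1,\dots,k,2k,\dots,k+1)$. Bilabelled minors: via edge contraction, edge deletion, deletion of unlabelled vertices. $\boldsymbol C_k$: vertices $[2k]$, in-labels $(1,\dots,k)$, out-labels $(k+1,\dots,2k)$, edges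 $\{i,i+1\}$ ($i\in[2k]\setminus\{k,2k\}$), $\{1,k+1\},\{k,2k\}$; $\boldsymbol M_k$: same vertices/labels, edges $\{i,i+k\}$. $\mathcal Q_k^P,\mathcal Q_k^S$ = bilabelled minors of $\boldsymbol C_k,\boldsymbol M_k$; $\mathcal Q_k$ their union. $\mathcal P_k$ = smallest class of $(k,k)$-bilabelled graphs containing $\mathcal Q_k$, closed under series composition, under $\boldsymbol F\mapsto\boldsymbol F\odot\boldsymbol Q$ ($\boldsymbol Q\in\mathcal Q_k^P$), and under $\boldsymbol F\mapsto\boldsymbol F^\sigma$ ($\sigma\in\mathscr C_k$). *)

From mathcomp Require Import all_boot perm.
Set Implicit Arguments. Unset Strict Implicit. Unset Printing Implicit Defensive.

(* A graph: a finite vertex type with a symmetric adjacency relation;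
   loops (gE x x) are allowed, multiple edges are not representable. *)
Record graph := Graph { gV : finType; gE : rel gV; gsym : symmetric gE }.

Definition giso (G H : graph) : Prop :=
  exists f : gV G -> gV H, bijective f /\ forall a b, gE (f a) (f b) = gE a b.

(* (k,k)-bilabelled graph: in-labels u = bin, out-labels v = bout *)
Record bgraph (k : nat) := BGraph
  { bG : graph; bin : 'I_k -> gV bG; bout : 'I_k -> gV bG }.

Definition biso k (F F' : bgraph k) : Prop :=
  exists f : gV (bG F) -> gV (bG F'), [/\ bijective f,
    forall a b, gE (f a) (f b) = gE a b,
    forall i, f (bin F i) = bin F' i & forall i, f (bout F i) = bout F' i].

Lemma symclos_sym (V : finType) (e : rel V) :
  symmetric (fun a b => e a b || e b a).
Proof. by move=> a b; rewrite orbC. Qed.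
Definition mkgraph (V : finType) (e : rel V) : graph :=
  Graph (symclos_sym e).

Section Quot.
Variables (G : graph) (r : rel (gV G)).
Definition qrel := connect (fun x y => r x y || r y x).
Definition qclass (x : gV G) : {set gV G} := [set y | qrel x y].
Definition qtype := {A : {set gV G} | [exists x, A == qclass x]}.
Definition qproj (x : gV G) : qtype :=
  exist _ (qclass x)
    (introT existsP (ex_intro (fun z => qclass x == qclass z) x (eqxx _))).
(* two classes are adjacent iff some members are adjacent;
   multiple edges are thereby removed *)
Definition qE (A B : qtype) : bool :=
  [exists x, exists y, [&& x \in val A, y \in val B & gE x y]].
Lemma qE_sym : symmetric qE.
Proof.
move=> A B; apply/existsP/existsP=> -[x /existsP[y /and3P[hx hy he]]];
  exists y; apply/existsP; exists x; by rewrite hx hy gsym he.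
Qed.
Definition gquot : graph := Graph qE_sym.
End Quot.

Definition uE (G H : graph) (a b : (gV G + gV H)%type) : bool :=
  match a, b with
  | inl x, inl y => gE x y
  | inr x, inr y => gE x y
  | _, _ => false
  end.
Lemma uE_sym G H : symmetric (@uE G H).
Proof. by move=> [x|x] [y|y] //=; rewrite gsym. Qed.
Definition gunion (G H : graph) : graph := Graph (@uE_sym G H).

Section Ops.
Variable k : nat.

Definition bstar (F : bgraph k) : bgraph k := BGraph (bout F) (bin F).

Definition ser_rel (F F' : bgraph k) : rel (gV (gunion (bG F) (bG F'))) :=
  fun a b => [exists i, (a == inl (bout F i)) && (b == inr (bin F' i))].
Definition bser (F F' : bgraph k) : bgraph k :=
  @BGraph k (gquot (@ser_rel F F'))
    (fun i => qproj (@ser_rel F F') (inl (bin F i)))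
    (fun i => qproj (@ser_rel F F') (inr (bout F' i))).

Definition par_rel (F F' : bgraph k) : rel (gV (gunion (bG F) (bG F'))) :=
  fun a b => [exists i, ((a == inl (bin F i)) && (b == inr (bin F' i)))
                     || ((a == inl (bout F i)) && (b == inr (bout F' i)))].
Definition bpar (F F' : bgraph k) : bgraph k :=
  @BGraph k (gquot (@par_rel F F'))
    (fun i => qproj (@par_rel F F') (inl (bin F i)))
    (fun i => qproj (@par_rel F F') (inl (bout F i))).

Definition btr (F : bgraph k) : graph :=
  gquot (fun a b => [exists i, (a == bin F i) && (b == bout F i)]).

(* w = (u_1..u_k, v_1..v_k), indexed by 'I_(k+k) (0-based) *)
Definition wlab (F : bgraph k) (j : 'I_(k + k)) : gV (bG F) :=
  match split j with inl i => bin F i | inr i => bout F i end.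
Definition bperm (F : bgraph k) (s : {perm 'I_(k + k)}) : bgraph k :=
  BGraph (fun i => wlab F (s (lshift k i))) (fun i => wlab F (s (rshift k i))).

(* the cyclic sequence (1..k,2k,..,k+1), 0-based: position p |-> cyc p *)
Definition cyc (p : nat) : nat := if p < k then p else (k + k + k).-1 - p.
(* sigma in C_k : sigma is a rotation of that cyclic sequence *)
Definition inCk (s : {perm 'I_(k + k)}) : Prop :=
  exists r : nat, forall j : 'I_(k + k),
    val (s j) = cyc ((cyc j + r) %% (k + k)).

(* C_k and M_k, vertices 'I_(k+k) (0-based), in-labels 0..k-1,
   out-labels k..2k-1 *)
Definition Cedge (a b : 'I_(k + k)) : bool :=
  [|| (val b == (val a).+1) && ((val b < k) || (k <= val a)),
      (val a == 0) && (val b == k)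
    | ((val a).+1 == k) && ((val b).+1 == k + k)].
Definition Medge (a b : 'I_(k + k)) : bool := val b == val a + k.
Definition bC : bgraph k :=
  @BGraph k (mkgraph Cedge) (fun i => lshift k i) (fun i => rshift k i).
Definition bM : bgraph k :=
  @BGraph k (mkgraph Medge) (fun i => lshift k i) (fun i => rshift k i).

(* F' arises from F by deleting edges and unlabelled vertices (up to iso) *)
Definition sub_step (F F' : bgraph k) : Prop :=
  exists f : gV (bG F') -> gV (bG F), [/\ injective f,
    forall a b, gE a b -> gE (f a) (f b),
    forall i, f (bin F' i) = bin F i & forall i, f (bout F' i) = bout F i].

(* F' arises from F by contracting the edge {x,y}, x <> y (up to iso) *)
Definition contr_step (F F' : bgraph k) : Prop :=
  exists (x y : gV (bG F)) (f : gV (bG F) -> gV (bG F')),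
    [/\ x != y, gE x y, forall b, exists a, f a = b,
        forall a b, f a = f b <-> [\/ a = b, (a = x /\ b = y) | (a = y /\ b = x)]
      & forall a' b', gE a' b' <-> exists a b,
           [/\ f a = a', f b = b', gE a b &
               ~ ((a = x /\ b = y) \/ (a = y /\ b = x))]] /\
    (forall i, f (bin F i) = bin F' i) /\
    (forall i, f (bout F i) = bout F' i).

Inductive bminor (F : bgraph k) : bgraph k -> Prop :=
| bminor_refl : bminor F F
| bminor_step G H : bminor F G -> sub_step G H \/ contr_step G H -> bminor F H.

Definition QP (F : bgraph k) : Prop := bminor bC F.
Definition QS (F : bgraph k) : Prop := bminor bM F.
Definition Q (F : bgraph k) : Prop := QP F \/ QS F.

(* the class P_k (closed under bilabelled isomorphism, as classes of
   bilabelled graphs are considered up to isomorphism in the paper) *)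
Inductive P : bgraph k -> Prop :=
| P_Q F : Q F -> P F
| P_ser F F' : P F -> P F' -> P (bser F F')
| P_par F Q' : P F -> QP Q' -> P (bpar F Q')
| P_perm F s : P F -> inCk s -> P (bperm F s)
| P_iso F F' : P F -> biso F F' -> P F'.
End Ops.

From mathcomp Require Import all_boot perm zify.
Set Implicit Arguments. Unset Strict Implicit. Unset Printing Implicit Defensive.

(* R^* . S lies in P_k because P_k is closed under F |-> F^*: every generator
   and operation commutes with ^* up to isomorphism, and conjugating a rotation
   of C_k by the exchange of in- and out-labels gives the inverse rotation.
   So it suffices to show that tr(X) is the underlying graph of a member of P_k
   whenever X is one, which we do by gluing u_j to v_j for j = 0, ..., k-1 in
   turn. Once the labels of index below j sit on u_j and v_j, parallel
   composition with the minor of C_k identifying u_0..u_j, v_0..v_j glues u_j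
   to v_j; series composition on both sides with a relabelling gadget (the
   parallel composition of a minor of M_k and one of C_k) then moves the labels
   of index at most j onto u_(j+1) and v_(j+1). Each gadget is obtained from
   C_k or M_k by contracting the edges inside the classes of the prescribed
   identification of labels and deleting all other edges. *)

Ltac case_ifs := repeat match goal with
  | |- context [if ?b then _ else _] =>
      lazymatch b with
      | context [if _ then _ else _] => fail | true => fail | false => fail
      | _ => let h := fresh "hif" in case: (boolP b) => h; cbv iota
      end
  end.

Lemma homo_connect (T U : finType) (e : rel T) (e' : rel U) (f : T -> U) :
  (forall x y, e x y -> connect e' (f x) (f y)) ->
  forall x y, connect e x y -> connect e' (f x) (f y).
Proof.
move=> fe x _ /connectP[p ep ->]; elim: p x ep => [|z p IHp] x /=.
  by rewrite connect0.
by case/andP=> /fe exz /IHp; apply: connect_trans.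
Qed.

Lemma connect_invariant (T : finType) (U : Type) (e : rel T) (f : T -> U) :
  (forall x y, e x y -> f x = f y) -> forall x y, connect e x y -> f x = f y.
Proof.
move=> fe x _ /connectP[p ep ->]; elim: p x ep => [|z p IHp] x //=.
by case/andP=> /fe -> /IHp.
Qed.

Lemma connect_neq_edge (T : finType) (e : rel T) x y :
  connect e x y -> x != y -> exists u w, e u w /\ u != w.
Proof.
move=> /connectP[p ep ->]; elim: p x ep => [|z p IHp] x /=; first by rewrite eqxx.
case/andP=> exz pz nx; case: (eqVneq x z) => [exz'|nxz]; last by exists x, z.
by move: pz nx; rewrite -exz'; apply: IHp.
Qed.

Lemma connect_same_rep (N : nat) (e : rel 'I_N) (c : 'I_N -> nat) :
  connect_sym e -> (forall x, exists2 y : 'I_N, val y = c x & connect e y x) ->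
  forall x y, c x = c y -> connect e x y.
Proof.
move=> esym rep x y cxy; have [x' x'E x'x] := rep x; have [y' y'E y'y] := rep y.
have x'y' : x' = y' by apply: val_inj; rewrite x'E y'E.
by rewrite esym in x'x; apply: connect_trans x'x _; rewrite x'y'.
Qed.

Lemma connect_interval (N : nat) (e : rel 'I_N) (lo hi : nat) :
  (forall z z' : 'I_N, lo <= z -> z' = z.+1 :> nat -> z' <= hi -> e z z') ->
  forall z z' : 'I_N, lo <= z <= z' -> z' <= hi -> connect e z z'.
Proof.
move=> step z z'; have [d] := ubnP (z' - z); elim: d z' => // d IHd z' d_gt zz' z'hi.
have [zE|z_lt] := eqVneq (z : nat) z'; first exact/eq_connect0/val_inj.
have z'1_lt : (nat_of_ord z').-1 < N by have := ltn_ord z'; lia.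
apply: (@connect_trans _ _ (Ordinal z'1_lt)); first by apply: IHd => /=; lia.
by apply: connect1; apply: step => /=; lia.
Qed.

Lemma surj_section (A : choiceType) (B : eqType) (p : A -> B) :
  (forall b, exists a, p a = b) -> {g : B -> A | cancel g p}.
Proof.
move=> ps; have ps1 b : exists a, p a == b by have [a <-] := ps b; exists a.
by exists (fun b => xchoose (ps1 b)) => b; apply/eqP/(xchooseP (ps1 b)).
Qed.

Section Quotient.
Variables (G : graph) (r : rel (gV G)).

Lemma qrel_refl x : qrel r x x.
Proof. exact: connect0. Qed.

Lemma qrel_sym x y : qrel r x y = qrel r y x.
Proof. by apply: sym_connect_sym => a b; rewrite orbC. Qed.

Lemma qrel_trans x y z : qrel r x y -> qrel r y z -> qrel r x z.
Proof. exact: connect_trans. Qed.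

Lemma qrel1 x y : r x y -> qrel r x y.
Proof. by move=> h; apply: connect1; rewrite h. Qed.

Lemma qrel_invariant (U : Type) (f : gV G -> U) :
  (forall x y, r x y -> f x = f y) -> forall x y, qrel r x y -> f x = f y.
Proof. by move=> fr; apply: connect_invariant => x y /orP[/fr | /fr]. Qed.

Lemma qprojE x y : qproj r x = qproj r y <-> qrel r x y.
Proof.
have classE a b : (b \in qclass r a) = qrel r a b by rewrite inE.
split=> [/(congr1 val) /= exy | xy].
  by rewrite -classE exy classE qrel_refl.
apply: val_inj; apply/setP=> z; rewrite /= !classE; apply/idP/idP.
  by apply: qrel_trans; rewrite qrel_sym.
exact: qrel_trans.
Qed.

Lemma qproj_surj (A : qtype r) : exists a, qproj r a = A.
Proof.
case: A => A hA; have /existsP[x /eqP eA] := hA.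
by exists x; apply: val_inj; rewrite /= eA.
Qed.

End Quotient.

Lemma qrel_sub (G : graph) (r r' : rel (gV G)) :
  (forall x y, r x y -> qrel r' x y) -> forall x y, qrel r x y -> qrel r' x y.
Proof.
move=> rr'; apply: connect_sub => x y /orP[/rr' //|/rr' yx].
by change (qrel r' x y); rewrite qrel_sym.
Qed.

Lemma qrel_eq (G : graph) (r r' : rel (gV G)) :
  (forall x y, r x y -> qrel r' x y) -> (forall x y, r' x y -> qrel r x y) ->
  forall x y, qrel r x y <-> qrel r' x y.
Proof. by move=> rr' r'r x y; split; apply: qrel_sub. Qed.

Definition quot_map (G W : graph) (p : gV G -> gV W) :=
  (forall w, exists a, p a = w) /\
  (forall x y, gE x y <-> exists a b, [/\ p a = x, p b = y & gE a b]).

Lemma quot_map_id (G : graph) : @quot_map G G id.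
Proof.
split=> [w|x y]; first by exists w.
by split=> [xy|[a [b [-> -> //]]]]; exists x, y.
Qed.

Lemma quot_map_comp (G W W' : graph) (p : gV G -> gV W) (q : gV W -> gV W') :
  quot_map p -> quot_map q -> quot_map (fun a => q (p a)).
Proof.
case=> ps pe [qs qe]; split.
  by move=> w; have [x <-] := qs w; have [a <-] := ps x; exists a.
move=> x y; split.
  by case/qe=> a [b [<- <- /pe [a' [b' [<- <- ab]]]]]; exists a', b'.
case=> a [b [<- <- ab]]; apply/qe; exists (p a), (p b); split=> //.
by apply/pe; exists a, b.
Qed.

Lemma quot_map_bij (G W : graph) (f : gV G -> gV W) :
  bijective f -> (forall a b, gE (f a) (f b) = gE a b) -> quot_map f.
Proof.
case=> g fK gK fE; split=> [w|x y]; first by exists (g w).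
split=> [xy|[a [b [<- <- ab]]]]; last by rewrite fE.
by exists (g x), (g y); rewrite !gK -fE !gK.
Qed.

Lemma quot_map_qproj (G : graph) (r : rel (gV G)) : @quot_map G (gquot r) (qproj r).
Proof.
split=> [|X Y /=]; first exact: qproj_surj.
have inE' x (A : qtype r) : x \in val A -> qproj r x = A.
  have [a <-] := qproj_surj A; rewrite /= inE => ax.
  by apply/qprojE; rewrite qrel_sym.
split.
  by case/existsP=> x /existsP[y /and3P[/inE' <- /inE' <- xy]]; exists x, y.
case=> a [b [<- <- ab]]; apply/existsP; exists a; apply/existsP; exists b.
by rewrite /= !inE !qrel_refl ab.
Qed.

Lemma quot_map_inl (Y H : graph) (r : rel (gV (gunion Y H))) :
  (forall x y : gV H, ~~ gE x y) -> (forall q, exists y, qrel r (inr q) (inl y)) ->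
  @quot_map Y (gquot r) (fun y => qproj r (inl y)).
Proof.
move=> noH glued; have [qs qe] := quot_map_qproj r; split.
  move=> A; have [[y|q] <-] := qs A; first by exists y.
  by have [y qy] := glued q; exists y; apply/qprojE; rewrite qrel_sym.
move=> A B; split.
  case/qe=> -[a|a] [[b|b] [<- <- /= ab]] //; first by exists a, b.
  by have := noH a b; rewrite ab.
by case=> a [b [<- <- ab]]; apply/qe; exists (inl a), (inl b).
Qed.

Lemma quot_map_kerE (G W W' : graph) (p : gV G -> gV W) (p' : gV G -> gV W') :
  quot_map p -> quot_map p' -> (forall a b, p a = p b <-> p' a = p' b) ->
  exists f : gV W -> gV W', [/\ bijective f, forall x y, gE (f x) (f y) = gE x y
     & forall a, f (p a) = p' a].
Proof.
case=> ps pe [ps' pe'] ker; have [g gK] := surj_section ps.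
have [g' g'K] := surj_section ps'.
have fp a : p' (g (p a)) = p' a by apply/ker; rewrite gK.
have gp a : p (g' (p' a)) = p a by apply/ker; rewrite g'K.
exists (fun w => p' (g w)); split=> //.
  exists (fun w => p (g' w)) => w.
    by have [a <-] := ps w; rewrite fp gp.
  by have [a <-] := ps' w; rewrite gp fp.
move=> x y; have [a <-] := ps x; have [b <-] := ps y; rewrite !fp.
by apply/idP/idP=> [/pe' | /pe] [a' [b' [/ker ea /ker eb ab]]];
  [apply/pe | apply/pe']; exists a', b'.
Qed.

Lemma quot_map_giso (G W W' : graph) (p : gV G -> gV W) (p' : gV G -> gV W') :
  quot_map p -> quot_map p' -> (forall a b, p a = p b <-> p' a = p' b) -> giso W W'.
Proof.
by move=> pq p'q ker; have [f [fbij fE _]] := quot_map_kerE pq p'q ker; exists f.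
Qed.

Section Bilabelled.
Variable k : nat.
Implicit Types F G H : bgraph k.

Lemma quot_map_biso (B : graph) F F' (p : gV B -> gV (bG F)) (p' : gV B -> gV (bG F')) :
  quot_map p -> quot_map p' -> (forall a b, p a = p b <-> p' a = p' b) ->
  (forall i, exists a, bin F i = p a /\ bin F' i = p' a) ->
  (forall i, exists a, bout F i = p a /\ bout F' i = p' a) -> biso F F'.
Proof.
move=> pq p'q ker ins outs; have [f [fbij fE fp]] := quot_map_kerE pq p'q ker.
exists f; split=> // i; first by have [a [-> ->]] := ins i.
by have [a [-> ->]] := outs i.
Qed.

Lemma bminor_trans F G H : bminor F G -> bminor G H -> bminor F H.
Proof. by move=> FG; elim=> // X Y _ FX XY; apply: bminor_step FX XY. Qed.

Lemma bminor_star F G : bminor F G -> bminor (bstar F) (bstar G).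
Proof.
elim=> [|X Y _ IH st]; first exact: bminor_refl.
apply: bminor_step IH _.
case: st => [[f [fi fE fin fout]]|[x [y [f [xy [fin fout]]]]]].
  by left; exists f; split.
by right; exists x, y, f; split.
Qed.

Lemma split_lshift (i : 'I_k) : split (lshift k i) = inl i.
Proof. exact: (unsplitK (inl i)). Qed.

Lemma split_rshift (i : 'I_k) : split (rshift k i) = inr i.
Proof. exact: (unsplitK (inr i)). Qed.

Lemma wlab_lshift F i : wlab F (lshift k i) = bin F i.
Proof. by rewrite /wlab split_lshift. Qed.

Lemma wlab_rshift F i : wlab F (rshift k i) = bout F i.
Proof. by rewrite /wlab split_rshift. Qed.

Definition swap_half (j : 'I_(k + k)) : 'I_(k + k) :=
  match split j with inl i => rshift k i | inr i => lshift k i end.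

Lemma swap_half_lshift i : swap_half (lshift k i) = rshift k i.
Proof. by rewrite /swap_half split_lshift. Qed.

Lemma swap_half_rshift i : swap_half (rshift k i) = lshift k i.
Proof. by rewrite /swap_half split_rshift. Qed.

Lemma val_swap_half j : val (swap_half j) = if j < k then j + k else j - k.
Proof.
case: (split_ordP j) => i ->;
  rewrite ?swap_half_lshift ?swap_half_rshift /=; have := ltn_ord i; case_ifs; lia.
Qed.

Lemma swap_halfK : involutive swap_half.
Proof.
by move=> j; case: (split_ordP j) => i ->;
  rewrite ?swap_half_lshift ?swap_half_rshift ?swap_half_lshift.
Qed.

Lemma wlab_star F j : wlab (bstar F) (swap_half j) = wlab F j.
Proof.
case: (split_ordP j) => i ->;
  by rewrite ?swap_half_lshift ?swap_half_rshift !(wlab_lshift, wlab_rshift).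
Qed.

Lemma bminor_star_swap (e : rel 'I_(k + k)) :
  (forall a b, e a b -> e (swap_half a) (swap_half b) || e (swap_half b) (swap_half a)) ->
  let B := @BGraph k (mkgraph e) (fun i => lshift k i) (fun i => rshift k i) in
  bminor B (bstar B).
Proof.
move=> eswap B; apply: bminor_step (bminor_refl _) _; left.
exists swap_half; split.
- exact: can_inj swap_halfK.
- by move=> a b /= /orP[] /eswap //; rewrite orbC.
- by move=> i; rewrite /= swap_half_rshift.
- by move=> i; rewrite /= swap_half_lshift.
Qed.

Lemma QP_star F : QP F -> QP (bstar F).
Proof.
move=> hF; apply: bminor_trans (bminor_star hF); apply: bminor_star_swap => a b.
rewrite /Cedge !val_swap_half /=; have := ltn_ord a; have := ltn_ord b.
by case_ifs; lia.
Qed.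

Lemma QS_star F : QS F -> QS (bstar F).
Proof.
move=> hF; apply: bminor_trans (bminor_star hF); apply: bminor_star_swap => a b.
rewrite /Medge !val_swap_half /=; have := ltn_ord a; have := ltn_ord b.
by case_ifs; lia.
Qed.

Lemma star_par F Q : biso (bpar (bstar F) (bstar Q)) (bstar (bpar F Q)).
Proof.
apply: (@quot_map_biso (gunion (bG F) (bG Q)) (bpar (bstar F) (bstar Q))
  (bstar (bpar F Q)) (qproj (@par_rel _ (bstar F) (bstar Q))) (qproj (@par_rel _ F Q))).
- exact: quot_map_qproj.
- exact: quot_map_qproj.
- move=> a b; rewrite !qprojE; apply: qrel_eq => x y /existsP[i xy];
    by apply: qrel1; apply/existsP; exists i; rewrite orbC.
- by move=> i; exists (inl (bout F i)).
- by move=> i; exists (inl (bin F i)).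
Qed.

Definition swap_sum (A B : Type) (x : A + B) : B + A :=
  match x with inl a => inr a | inr b => inl b end.

Lemma swap_sumK (A B : Type) (x : A + B) : swap_sum (swap_sum x) = x.
Proof. by case: x. Qed.

Lemma qrel_swap_sum (G H : graph) (e : rel (gV (gunion G H)))
    (e' : rel (gV (gunion H G))) :
  (forall a b, e a b -> e' (swap_sum b) (swap_sum a)) ->
  forall a b, qrel e a b -> qrel e' (swap_sum a) (swap_sum b).
Proof.
move=> ee'; apply: homo_connect => x y /orP[] /ee' h; apply: connect1;
  by rewrite h ?orbT.
Qed.

Lemma star_ser F F' : biso (bser (bstar F') (bstar F)) (bstar (bser F F')).
Proof.
pose r := @ser_rel _ F F'; pose r' := @ser_rel _ (bstar F') (bstar F).
have rr' a b : r a b -> r' (swap_sum b) (swap_sum a).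
  by case/existsP=> i /andP[/eqP -> /eqP ->]; apply/existsP; exists i; rewrite !eqxx.
have r'r a b : r' a b -> r (swap_sum b) (swap_sum a).
  by case/existsP=> i /andP[/eqP -> /eqP ->]; apply/existsP; exists i; rewrite !eqxx.
apply: (@quot_map_biso (gunion (bG F) (bG F')) (bser (bstar F') (bstar F))
  (bstar (bser F F')) (fun a => qproj r' (swap_sum a))
  (qproj r)).
- apply: quot_map_comp (quot_map_qproj _).
  apply: quot_map_bij; first by exists (@swap_sum _ _) => x; rewrite swap_sumK.
  by case=> a [] b.
- exact: quot_map_qproj.
- move=> a b; rewrite !qprojE; split=> [|ab]; last exact: (qrel_swap_sum rr' ab).
  by move/(qrel_swap_sum r'r); rewrite !swap_sumK.
- by move=> i; exists (inr (bout F' i)).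
- by move=> i; exists (inl (bin F i)).
Qed.

Definition swap_perm : {perm 'I_(k + k)} := perm (can_inj swap_halfK).

Lemma star_perm F (s : {perm 'I_(k + k)}) :
  biso (bperm (bstar F) (swap_perm * s * swap_perm)%g) (bstar (bperm F s)).
Proof.
exists id; split=> //; first by exists id.
- by move=> i /=; rewrite !permM !permE swap_half_lshift wlab_star.
- by move=> i /=; rewrite !permM !permE swap_half_rshift wlab_star.
Qed.

Lemma cyc_lt p : p < k + k -> cyc k p < k + k.
Proof. by rewrite /cyc; case_ifs; lia. Qed.

Lemma cyc_swap_half j : cyc k (swap_half j) = (k + k).-1 - cyc k j.
Proof.
rewrite -[nat_of_ord _]/(val (swap_half j)) val_swap_half /cyc.
by have := ltn_ord j; case_ifs; lia.
Qed.

Lemma swap_half_cyc p : p < k + k ->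
  (if cyc k p < k then cyc k p + k else cyc k p - k) = cyc k ((k + k).-1 - p).
Proof. by rewrite /cyc; case_ifs; lia. Qed.

(* [swap_half] reverses the cyclic sequence, so conjugating a rotation by it
   gives the inverse rotation. *)
Lemma inCk_star (s : {perm 'I_(k + k)}) : inCk s -> inCk (swap_perm * s * swap_perm)%g.
Proof.
case=> r rot; exists (k + k - r %% (k + k)) => j.
have modn_double x : x < k + k + (k + k) ->
    x %% (k + k) = if x < k + k then x else x - (k + k).
  case: ifP => x_lt x_lt2; first by rewrite modn_small.
  by rewrite {1}(_ : x = x - (k + k) + (k + k)) ?modnDr ?modn_small; lia.
have kk_gt0 : 0 < k + k by have := ltn_ord j; lia.
have := ltn_pmod r kk_gt0; have := cyc_lt (ltn_ord j).
rewrite !permM !permE val_swap_half rot swap_half_cyc; last exact: ltn_pmod.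
rewrite cyc_swap_half -modnDmr; set t := r %% (k + k) => cj_lt t_lt.
congr (cyc k _); rewrite !modn_double; try lia.
by case_ifs; lia.
Qed.

Lemma P_star F : P F -> P (bstar F).
Proof.
elim=> {F} [F [] QF|F F' _ PF _ PF'|F Q _ PF QQ|F s _ PF Cs|F F' _ PF [f [? ? ? ?]]].
- by apply: P_Q; left; apply: QP_star.
- by apply: P_Q; right; apply: QS_star.
- by apply: P_iso (star_ser F F'); apply: P_ser.
- by apply: P_iso (star_par F Q); apply: P_par => //; apply: QP_star.
- by apply: P_iso (star_perm F s); apply: P_perm => //; apply: inCk_star.
- by apply: P_iso PF _; exists f; split.
Qed.

End Bilabelled.

Section Presentation.
Variable k : nat.
Implicit Types X Y Q G : bgraph k.

Definition is_bquot X Y (p : gV (bG X) -> gV (bG Y)) (s : rel (gV (bG X))) :=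
  [/\ quot_map p, forall a b, p a = p b <-> qrel s a b,
      forall i, bin Y i = p (bin X i) & forall i, bout Y i = p (bout X i)].
Arguments is_bquot : clear implicits.

Lemma is_bquot_id X : is_bquot X X id (fun _ _ => false).
Proof.
split=> //; first exact: quot_map_id.
by move=> a b; split=> [->|]; [exact: qrel_refl | apply: (qrel_invariant (f := id))].
Qed.

Lemma is_bquot_star X Y p s : is_bquot X Y p s -> is_bquot (bstar X) (bstar Y) p s.
Proof. by case. Qed.

Lemma is_bquot_eq X Y p s s' :
  (forall a b, qrel s a b <-> qrel s' a b) -> is_bquot X Y p s -> is_bquot X Y p s'.
Proof. by move=> ss' [pq pker pin pout]; split=> // a b; rewrite -ss'. Qed.

Definition all_labelled X := forall x, exists al, wlab X al = x.

Definition label_pattern (T : eqType) Q (c : 'I_(k + k) -> T) :=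
  [/\ forall x y : gV (bG Q), ~~ gE x y, all_labelled Q &
      forall al be, wlab Q al = wlab Q be <-> c al = c be].

Lemma label_pattern_ext (T : eqType) Q (c c' : 'I_(k + k) -> T) :
  c =1 c' -> label_pattern Q c -> label_pattern Q c'.
Proof. by move=> cc' [noQ labQ cQ]; split=> // al be; rewrite -!cc'. Qed.

Definition pattern_rel (T : eqType) X (c : 'I_(k + k) -> T) : rel (gV (bG X)) :=
  fun a b => [exists al, exists be, [&& c al == c be, a == wlab X al & b == wlab X be]].
Arguments pattern_rel {T} X c.

Lemma par_rel_wlab Y Q al : @par_rel _ Y Q (inl (wlab Y al)) (inr (wlab Q al)).
Proof.
by case: (split_ordP al) => i ->; apply/existsP; exists i;
  rewrite !(wlab_lshift, wlab_rshift) !eqxx ?orbT.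
Qed.

Lemma par_relP Y Q x y : @par_rel _ Y Q x y ->
  exists al, x = inl (wlab Y al) /\ y = inr (wlab Q al).
Proof.
case/existsP=> i /orP[] /andP[/eqP -> /eqP ->].
  by exists (lshift k i); rewrite !wlab_lshift.
by exists (rshift k i); rewrite !wlab_rshift.
Qed.

Lemma is_bquot_par (T : eqType) X Y p s Q (c : 'I_(k + k) -> T) :
  is_bquot X Y p s -> label_pattern Q c ->
  is_bquot X (bpar Y Q) (fun a => qproj (@par_rel _ Y Q) (inl (p a)))
    (relU s (pattern_rel X c)).
Proof.
move=> [pq pker pin pout] [noQ labQ cQ]; set r := @par_rel _ Y Q.
have pw al : wlab Y al = p (wlab X al).
  by case: (split_ordP al) => i ->; rewrite !(wlab_lshift, wlab_rshift).
split.
- apply: quot_map_comp pq (quot_map_inl noQ _) => q.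
  have [al <-] := labQ q; exists (wlab Y al).
  by rewrite qrel_sym; apply: qrel1; apply: par_rel_wlab.
- move=> a b; split; last first.
    apply: (qrel_invariant (f := fun z => qproj r (inl (p z)))).
    move=> x y /orP[/qrel1 /pker -> //|].
    case/existsP=> al /existsP[be /and3P[/eqP /cQ Qab /eqP -> /eqP ->]].
    rewrite -!pw; apply/qprojE; apply: qrel_trans (qrel1 (par_rel_wlab Y Q al)) _.
    by rewrite Qab qrel_sym; apply: qrel1; apply: par_rel_wlab.
  have [g gK] := surj_section (proj1 pq); have [h hK] := surj_section labQ.
  pose phi (z : gV (gunion (bG Y) (bG Q))) := match z with
    | inl y => qproj (relU s (pattern_rel X c)) (g y)
    | inr q => qproj (relU s (pattern_rel X c)) (wlab X (h q)) end.
  have phi_p a' : phi (inl (p a')) = qproj _ a'.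
    apply/qprojE; apply: qrel_sub (proj1 (pker _ _) (gK (p a'))) => x y sxy.
    by apply: qrel1; rewrite /= sxy.
  move/qprojE/(qrel_invariant (f := phi)) => inv.
  apply/qprojE; rewrite -!phi_p; apply: inv => _ _ /par_relP [al [-> ->]].
  rewrite pw phi_p /=; apply/qprojE; apply: qrel1; apply/orP; right.
  apply/existsP; exists al; apply/existsP; exists (h (wlab Q al)).
  by rewrite !eqxx !andbT; apply/eqP/cQ; rewrite hK.
- by move=> i; rewrite /= pin.
- by move=> i; rewrite /= pout.
Qed.

Lemma label_pattern_par (T1 T2 T : eqType) H Q (c1 : 'I_(k + k) -> T1)
    (c2 : 'I_(k + k) -> T2) (c : 'I_(k + k) -> T) :
  label_pattern H c1 -> label_pattern Q c2 ->
  (forall al be, c1 al = c1 be -> c al = c be) ->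
  (forall al be, c2 al = c2 be -> c al = c be) ->
  (forall al be, c al = c be ->
     connect (fun x y => (c1 x == c1 y) || (c2 x == c2 y)) al be) ->
  label_pattern (bpar H Q) c.
Proof.
move=> patH patQ c1c c2c cjoin; have [noH labH c1H] := patH.
have [[ps pE] pker pin pout] := is_bquot_par (is_bquot_id H) patQ.
have pw al : wlab (bpar H Q) al = qproj (@par_rel _ H Q) (inl (wlab H al)).
  by case: (split_ordP al) => i ->; rewrite !(wlab_lshift, wlab_rshift).
split.
- by move=> x y; apply/negP => /pE [a [b [_ _ ab]]]; have := noH a b; rewrite ab.
- by move=> x; have [a <-] := ps x; have [al <-] := labH a; exists al; rewrite pw.
move=> al be; rewrite !pw; apply: (iff_trans (pker _ _)); split.
  have [h hK] := surj_section labH.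
  have cw al' : c (h (wlab H al')) = c al' by apply/c1c/c1H; rewrite hK.
  move/(qrel_invariant (f := fun a => c (h a))); rewrite !cw; apply.
  move=> _ _ /orP[//|/existsP[a1 /existsP[b1 /and3P[/eqP c2ab /eqP -> /eqP ->]]]].
  by rewrite !cw; apply: c2c.
move/cjoin; apply: (homo_connect (f := wlab H)) => x y /orP[/eqP /c1H -> |/eqP c2xy].
  exact: connect0.
apply: connect1; apply/orP; left; apply/orP; right.
by apply/existsP; exists x; apply/existsP; exists y; rewrite c2xy !eqxx.
Qed.

Definition relabelling G (t : 'I_k -> 'I_k) :=
  [/\ forall x y : gV (bG G), ~~ gE x y, bijective (bin G)
    & forall i, bout G i = bin G (t i)].

Lemma is_bquot_ser X Y p s G t :
  is_bquot X Y p s -> relabelling G t ->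
  is_bquot (@BGraph k (bG X) (bin X) (fun i => bout X (t i))) (bser Y G)
    (fun a => qproj (@ser_rel _ Y G) (inl (p a))) s.
Proof.
move=> [pq pker pin pout] [noG [g binK gK] Gt]; set r := @ser_rel _ Y G.
have rY i : r (inl (bout Y i)) (inr (bin G i)) by apply/existsP; exists i; rewrite !eqxx.
split.
- apply: quot_map_comp pq (quot_map_inl noG _) => x.
  exists (bout Y (g x)); rewrite qrel_sym.
  by have := @qrel1 (gunion (bG Y) (bG G)) r _ _ (rY (g x)); rewrite gK.
- move=> a b; split=> [|/pker -> //].
  pose phi (z : gV (gunion (bG Y) (bG G))) :=
    match z with inl y => y | inr x => bout Y (g x) end.
  move/qprojE/(qrel_invariant (f := phi)) => inv; apply/pker; apply: inv.
  by move=> _ _ /existsP[i /andP[/eqP -> /eqP ->]]; rewrite /= binK.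
- by move=> i; rewrite /= pin.
- move=> i; rewrite /= Gt -pout; apply/(@qprojE _ r).
  by rewrite qrel_sym; apply: qrel1.
Qed.

Lemma label_pattern_relabelling G (t : 'I_k -> 'I_k) (c : 'I_(k + k) -> nat) :
  label_pattern G c -> (forall i, c (lshift k i) = i) ->
  (forall i, c (rshift k i) = t i) -> relabelling G t.
Proof.
move=> [noG labG cG] cl cr.
have Gt i : bout G i = bin G (t i).
  by rewrite -wlab_rshift -wlab_lshift; apply/cG; rewrite cl cr.
have bin_inj : injective (bin G).
  by move=> i i'; rewrite -!wlab_lshift => /cG; rewrite !cl => /val_inj.
have bin_surj x : exists i, bin G i = x.
  have [al <-] := labG x; case: (split_ordP al) => i ->.
    by exists i; rewrite wlab_lshift.
  by exists (t i); rewrite wlab_rshift Gt.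
have [g gK] := surj_section bin_surj.
by split=> //; exists g => // i; apply: bin_inj; rewrite gK.
Qed.

End Presentation.

Arguments is_bquot {k} X Y p s.
Arguments pattern_rel {k T} X c.

Definition class_rel (G : graph) (T : eqType) (c : gV G -> T) : rel (gV G) :=
  fun u w => gE u w && (c u == c w).

Definition class_connected (G : graph) (T : eqType) (c : gV G -> T) :=
  forall x y, c x = c y -> connect (class_rel c) x y.

Lemma class_rel_sym (G : graph) (T : eqType) (c : gV G -> T) : connect_sym (class_rel c).
Proof. by apply: sym_connect_sym => u w; rewrite /class_rel gsym eq_sym. Qed.

Definition edgeless (V : finType) : graph :=
  @Graph V (fun _ _ => false) (fun _ _ => erefl).

Section Minors.
Variable k : nat.
Implicit Types F : bgraph k.

Section Contraction.
Variables (F : bgraph k) (a b : gV (bG F)).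
Hypothesis ab : a != b.

Definition contr_vertex := {x : gV (bG F) | x != b}.

Definition contr_map (x : gV (bG F)) : contr_vertex := insubd (exist _ a ab) x.

Lemma val_contr_map x : val (contr_map x) = if x == b then a else x.
Proof. by rewrite /contr_map val_insubd; case: eqP. Qed.

Definition contr_edge (x1 y1 : contr_vertex) : bool :=
  [exists u, exists w, [&& contr_map u == x1, contr_map w == y1, gE u w &
     ~~ (((u == a) && (w == b)) || ((u == b) && (w == a)))]].

Lemma contr_edge_sym : symmetric contr_edge.
Proof.
suff E x1 y1 : contr_edge x1 y1 -> contr_edge y1 x1.
  by move=> x1 y1; apply/idP/idP; apply: E.
case/existsP=> u /existsP[w /and4P[ux wy uw not_ab]].
apply/existsP; exists w; apply/existsP; exists u; rewrite wy ux gsym uw /=.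
by move: not_ab; apply: contra => /orP[] /andP[-> ->]; rewrite ?orbT.
Qed.

Definition bcontract : bgraph k :=
  @BGraph k (@Graph contr_vertex contr_edge contr_edge_sym)
    (fun i => contr_map (bin F i)) (fun i => contr_map (bout F i)).

Lemma contr_step_bcontract : gE a b -> contr_step F bcontract.
Proof.
move=> eab; exists a, b, contr_map; split; [split|split] => //.
- by move=> x1; exists (val x1); rewrite /contr_map valKd.
- move=> x y; split.
    move/(congr1 val); rewrite !val_contr_map.
    case: (eqVneq x b) => [->|xb]; case: (eqVneq y b) => [->|yb] xy.
    + by constructor 1.
    + by constructor 3.
    + by constructor 2.
    + by constructor 1.
  case=> [->|[-> ->]|[-> ->]] //; apply: val_inj;
    by rewrite !val_contr_map eqxx (negbTE ab).
- move=> x1 y1; split.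
    case/existsP=> u /existsP[w /and4P[/eqP ux /eqP wy uw not_ab]].
    exists u, w; split=> //; case=> -[eu ew]; move: not_ab; subst u w;
      by rewrite !eqxx ?orbT.
  case=> u [w [ux wy uw not_ab]]; apply/existsP; exists u; apply/existsP; exists w.
  rewrite ux wy !eqxx uw /=; apply/negP => /orP[] /andP[/eqP eu /eqP ew]; apply: not_ab.
    by left.
  by right.
Qed.

Lemma card_bcontract : #|gV (bG bcontract)| = #|gV (bG F)|.-1.
Proof. by rewrite /= card_sig -(cardC1 b); apply: eq_card => x; rewrite !inE. Qed.

Lemma wlab_bcontract al : wlab bcontract al = contr_map (wlab F al).
Proof. by case: (split_ordP al) => i ->; rewrite !(wlab_lshift, wlab_rshift). Qed.

Lemma bcontract_labelled : all_labelled F -> all_labelled bcontract.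
Proof.
move=> labF x1; have [al alE] := labF (val x1); exists al.
by rewrite wlab_bcontract alE /contr_map valKd.
Qed.

Lemma bcontract_class_connected (T : eqType) (c : gV (bG F) -> T) :
  c a = c b -> class_connected c ->
  class_connected (fun x1 : gV (bG bcontract) => c (val x1)).
Proof.
move=> cab cc x1 y1 cxy.
have cK x : c (val (contr_map x)) = c x.
  by rewrite val_contr_map; case: eqP => [->|].
suff: connect (class_rel (fun x1 : gV (bG bcontract) => c (val x1)))
    (contr_map (val x1)) (contr_map (val y1)) by rewrite /contr_map !valKd.
move: (cc _ _ cxy); apply: homo_connect => x y /andP[xy /eqP cxy'].
case: (boolP ((x == a) && (y == b) || (x == b) && (y == a))) => [xy_ab|not_ab].
  apply: eq_connect0; apply: val_inj; rewrite !val_contr_map.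
  by case/orP: xy_ab => /andP[/eqP -> /eqP ->]; rewrite eqxx (negbTE ab).
apply: connect1; apply/andP; split; last by rewrite !cK cxy'.
by apply/existsP; exists x; apply/existsP; exists y; rewrite !eqxx xy not_ab.
Qed.

End Contraction.

Lemma bminor_edgeless (T : eqType) F (c : gV (bG F) -> T) :
  all_labelled F -> injective c ->
  exists Q, bminor F Q /\ label_pattern Q (fun al => c (wlab F al)).
Proof.
move=> labF cinj; exists (@BGraph k (edgeless (gV (bG F))) (bin F) (bout F)); split.
  by apply: bminor_step (bminor_refl _) _; left; exists id; split.
by split=> // al be; split=> [E | /cinj //]; exact: (congr1 c E).
Qed.

(* Contract edges inside the classes of c until c is injective, then delete the
   remaining edges. *)
Lemma bminor_label_pattern (T : eqType) F (c : gV (bG F) -> T) :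
  all_labelled F -> class_connected c ->
  exists Q, bminor F Q /\ label_pattern Q (fun al => c (wlab F al)).
Proof.
have [n] := ubnP #|gV (bG F)|; elim: n => // n IHn in F c *; move=> Fn labF ccF.
have [/injectiveP cinj|/injectivePn [x [y xy cxy]]] := boolP (injectiveb c).
  exact: bminor_edgeless.
have [u [w [/andP[uw /eqP cuw] nuw]]] := connect_neq_edge (ccF _ _ cxy) xy.
have card_lt : #|gV (bG (bcontract nuw))| < n.
  have : 0 < #|gV (bG F)| by apply/card_gt0P; exists x.
  by rewrite card_bcontract; lia.
have [Q [F'Q patQ]] := IHn _ _ card_lt (bcontract_labelled labF)
  (bcontract_class_connected cuw ccF).
exists Q; split.
  apply: bminor_trans F'Q; apply: bminor_step (bminor_refl _) _; right.
  exact: contr_step_bcontract.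
apply: label_pattern_ext patQ => al; rewrite wlab_bcontract val_contr_map.
by case: eqP => [->|].
Qed.

End Minors.

Section Gadgets.
Variable k : nat.

Lemma mkgraph_label_pattern (e : rel 'I_(k + k)) (c : 'I_(k + k) -> nat) :
  @class_connected (mkgraph e) _ c ->
  exists Q, bminor (@BGraph k (mkgraph e) (fun i => lshift k i) (fun i => rshift k i)) Q
    /\ label_pattern Q c.
Proof.
set B := @BGraph _ _ _ _ => cc.
have wB al : wlab B al = al.
  by case: (split_ordP al) => i ->; rewrite !(wlab_lshift, wlab_rshift).
have [|Q [BQ patQ]] := bminor_label_pattern (F := B) _ cc; first by move=> x; exists x.
by exists Q; split=> //; apply: label_pattern_ext patQ => al; rewrite wB.
Qed.

Lemma Cpath_connect (c : 'I_(k + k) -> nat) (lo hi v : nat) :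
  (hi < k) || (k <= lo) -> (forall z : 'I_(k + k), lo <= z <= hi -> c z = v) ->
  forall z z' : 'I_(k + k), lo <= z <= z' -> z' <= hi ->
    connect (@class_rel (mkgraph (@Cedge k)) _ c) z z'.
Proof.
move=> side cv; apply: connect_interval => z z' loz z'E z'hi; apply/andP; split.
  by rewrite /= /Cedge /=; lia.
by rewrite !cv //; lia.
Qed.

Definition glue_pattern (j a : nat) : nat :=
  if (a <= j) || (k <= a <= k + j) then 0 else a.

Lemma glue_gadget j : j < k ->
  exists Q, QP Q /\ label_pattern Q (fun al : 'I_(k + k) => glue_pattern j al).
Proof.
move=> jk; apply: mkgraph_label_pattern; apply: connect_same_rep.
  exact: (@class_rel_sym (mkgraph (@Cedge k))).
move=> x; have x_lt := ltn_ord x; rewrite {1}/glue_pattern.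
case: ifPn => [x_in|_]; last by exists x; last exact: connect0.
have c0 (z : 'I_(k + k)) : (z <= j) || (k <= z <= k + j) -> glue_pattern j z = 0.
  by rewrite /glue_pattern => ->.
have k0 : 0 < k + k by lia.
have kk : k < k + k by lia.
exists (Ordinal k0) => //; case/orP: x_in => [x_le|x_far].
  apply: (@Cpath_connect _ 0 j 0) => /=; try lia.
  by move=> z zj; apply: c0; lia.
apply: (@connect_trans _ _ (Ordinal kk)).
  apply: connect1; apply/andP; split; first by rewrite /= /Cedge /=; lia.
  by rewrite !c0 //=; lia.
apply: (@Cpath_connect _ k (k + j) 0) => /=; try lia.
by move=> z zj; apply: c0; lia.
Qed.

Definition outpath_pattern (m a : nat) : nat := if k <= a <= k + m then k else a.

Lemma outpath_gadget m : m < k ->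
  exists Q, QP Q /\ label_pattern Q (fun al : 'I_(k + k) => outpath_pattern m al).
Proof.
move=> mk; apply: mkgraph_label_pattern; apply: connect_same_rep.
  exact: (@class_rel_sym (mkgraph (@Cedge k))).
move=> x; have x_lt := ltn_ord x; rewrite {1}/outpath_pattern.
case: ifPn => [x_in|_]; last by exists x; last exact: connect0.
have kk : k < k + k by lia.
exists (Ordinal kk) => //.
apply: (@Cpath_connect _ k (k + m) k) => /=; try lia.
by move=> z zm; rewrite /outpath_pattern zm.
Qed.

Definition pair_pattern (m a : nat) : nat := if k + m <= a then a - k else a.

Lemma pair_gadget m :
  exists Q, QS Q /\ label_pattern Q (fun al : 'I_(k + k) => pair_pattern m al).
Proof.
apply: mkgraph_label_pattern; apply: connect_same_rep.
  exact: (@class_rel_sym (mkgraph (@Medge k))).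
move=> x; have x_lt := ltn_ord x; rewrite {1}/pair_pattern.
case: ifPn => [x_far|_]; last by exists x; last exact: connect0.
have y_lt : x - k < k + k by lia.
exists (Ordinal y_lt) => //; apply: connect1; apply/andP; split.
  by rewrite /= /Medge /=; apply/orP; left; apply/eqP; lia.
by rewrite /pair_pattern /=; case_ifs; lia.
Qed.

Definition raise (m : nat) (i : 'I_k) : 'I_k := insubd i (maxn i m).

Lemma val_raise m i : m < k -> val (raise m i) = maxn i m.
Proof. by move=> mk; rewrite val_insubd gtn_max ltn_ord mk. Qed.

Definition relabel_pattern (m a : nat) : nat := if a < k then a else maxn (a - k) m.

(* A minor of C_k identifies v_0, ..., v_m, and a minor of M_k glues v_i to u_i
   for i >= m. *)
Lemma relabel_gadget m : m < k -> exists G, P G /\ relabelling G (raise m).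
Proof.
move=> mk; have [H [QSH patH]] := pair_gadget m.
have [Q [QPQ patQ]] := outpath_gadget mk.
exists (bpar H Q); split; first by apply: P_par => //; apply: P_Q; right.
apply: (@label_pattern_relabelling _ _ _ (fun al => relabel_pattern m al)).
- apply: label_pattern_par patH patQ _ _ _ => [al be|al be|].
  + rewrite /pair_pattern /relabel_pattern; have := ltn_ord al; have := ltn_ord be.
    by case_ifs; lia.
  + rewrite /outpath_pattern /relabel_pattern; have := ltn_ord al; have := ltn_ord be.
    by case_ifs; lia.
  apply: connect_same_rep.
    by apply: sym_connect_sym => x y; rewrite eq_sym [outpath_pattern _ _ == _]eq_sym.
  move=> x; have x_lt := ltn_ord x.
  have [x_in|x_out] := ltnP x k.
    by exists x; [rewrite /relabel_pattern x_in | exact: connect0].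
  have [far|near] := ltnP m (x - k).
    have y_lt : x - k < k + k by lia.
    exists (Ordinal y_lt); first by rewrite /relabel_pattern /=; case_ifs; lia.
    apply: connect1; apply/orP; left; apply/eqP.
    by rewrite /pair_pattern /=; case_ifs; lia.
  have km_lt : k + m < k + k by lia.
  have m_lt : m < k + k by lia.
  exists (Ordinal m_lt); first by rewrite /relabel_pattern /=; case_ifs; lia.
  apply: (@connect_trans _ _ (Ordinal km_lt)); apply: connect1; apply/orP;
    [left | right]; apply/eqP; rewrite /outpath_pattern /pair_pattern /=; case_ifs; lia.
- by move=> i; rewrite /relabel_pattern /= ltn_ord.
- by move=> i; rewrite val_raise // /relabel_pattern /=; case_ifs; lia.
Qed.

End Gadgets.

Section Trace.
Variables (k : nat) (X : bgraph k).

Definition glue_rel (j : nat) : rel (gV (bG X)) :=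
  fun a b => [exists i : 'I_k, [&& i < j, a == bin X i & b == bout X i]].

Definition brelabel (f : 'I_k -> 'I_k) : bgraph k :=
  @BGraph k (bG X) (fun i => bin X (f i)) (fun i => bout X (f i)).

(* [u_i] is glued to [v_i] for [i < j], and the labels [u_i, v_i] with [i < m]
   are moved to [u_m, v_m]. *)
Definition glued (j m : nat) :=
  exists2 f : 'I_k -> 'I_k, (forall i, f i = maxn i m :> nat)
    & exists Y, P Y /\ exists p, is_bquot (brelabel f) Y p (glue_rel j).

Lemma glued0 : P X -> glued 0 0.
Proof.
move=> PX; exists id => [i|]; first by rewrite maxn0.
exists X; split=> //; exists id; apply: is_bquot_eq (is_bquot_id X).
by apply: qrel_eq => // a b /existsP[].
Qed.

Lemma glue_step j : j < k -> glued j j -> glued j.+1 j.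
Proof.
move=> jk [f fE [Y [PY [p pY]]]]; have [Q [QPQ patQ]] := glue_gadget jk.
exists f => //; exists (bpar Y Q); split; first exact: P_par.
eexists; apply: is_bquot_eq (is_bquot_par pY patQ).
pose jo := Ordinal jk.
have f_le (i : 'I_k) : i <= j -> f i = jo.
  by move=> ij; apply: val_inj => /=; rewrite fE; lia.
have glue_j : qrel (glue_rel j.+1) (bout X jo) (bin X jo).
  by rewrite qrel_sym; apply: qrel1; apply/existsP; exists jo; rewrite /= ltnSn !eqxx.
have class (al : 'I_(k + k)) : glue_pattern k j al = 0 ->
    qrel (glue_rel j.+1) (wlab (brelabel f) al) (bin X jo).
  case: (split_ordP al) => i ->; rewrite ?wlab_lshift ?wlab_rshift /glue_pattern /=;
    move=> c0; rewrite f_le ?qrel_refl //; move: c0; have := ltn_ord i; case_ifs; lia.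
apply: qrel_eq => a b.
  case/orP=> [/existsP[i /and3P[ij aE bE]]|].
    by apply: qrel1; apply/existsP; exists i; rewrite aE bE ltnW.
  case/existsP=> al /existsP[be /and3P[/eqP cab /eqP -> /eqP ->]].
  have [c0|c_ne0] := eqVneq (glue_pattern k j al) 0.
    by apply: qrel_trans (class _ c0) _; rewrite qrel_sym; apply: class; rewrite -cab.
  suff -> : al = be by apply: qrel_refl.
  by apply: val_inj => /=; move: cab c_ne0; rewrite /glue_pattern; case_ifs; lia.
case/existsP=> i /and3P[ij /eqP -> /eqP ->]; apply: qrel1.
case: (ltnP i j) => [i_lt|i_ge]; first by rewrite /= /glue_rel; apply/orP; left;
  apply/existsP; exists i; rewrite i_lt !eqxx.
apply/orP; right; apply/existsP; exists (lshift k i); apply/existsP; exists (rshift k i).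
rewrite wlab_lshift wlab_rshift /= f_le; last by lia.
have -> : i = jo by apply: val_inj => /=; lia.
by rewrite !eqxx /glue_pattern /=; case_ifs; lia.
Qed.

Lemma relabel_step j : j.+1 < k -> glued j.+1 j -> glued j.+1 j.+1.
Proof.
move=> jk [f fE [Y [PY [p pY]]]]; have [G [PG relG]] := relabel_gadget jk.
exists (fun i => f (raise j.+1 i)) => [i|]; first by rewrite fE val_raise //; lia.
exists (bstar (bser (bstar (bser Y G)) G)); split.
  by apply: P_star; apply: P_ser => //; apply: P_star; apply: P_ser.
have := is_bquot_star (is_bquot_ser (is_bquot_star (is_bquot_ser pY relG)) relG).
by move=> pY'; eexists; exact: pY'.
Qed.

Lemma glued_all : P X -> forall j, j < k -> glued j.+1 j.
Proof.
move=> PX; elim=> [|j IHj] jk; first exact: glue_step jk (glued0 PX).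
apply: (glue_step jk); apply: (relabel_step jk); apply: IHj; lia.
Qed.

Lemma btr_in_P : P X -> exists Y : bgraph k, P Y /\ giso (btr X) (bG Y).
Proof.
move=> PX; have [j kj [m [f _ [Y [PY [p [pq pker _ _]]]]]]] :
    exists2 j, k <= j & exists m, glued j m.
  have [k0|k_gt0] := posnP k; first by exists 0; [rewrite k0 | exists 0; apply: glued0].
  by exists k.-1.+1; [lia | exists k.-1; apply: (glued_all PX); lia].
exists Y; split=> //; apply: quot_map_giso (quot_map_qproj _) pq _ => a b.
rewrite qprojE pker; apply: qrel_eq => x y /existsP[i].
  case/andP=> xE yE; apply: (@qrel1 (bG X)); apply/existsP; exists i.
  by rewrite xE yE (leq_trans _ kj).
by case/and3P=> _ xE yE; apply: qrel1; apply/existsP; exists i; rewrite xE.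
Qed.

End Trace.

Theorem lemma4p2 (k : nat) :
  forall R S : bgraph k, P R -> P S ->
    exists Q' : bgraph k, P Q' /\ giso (btr (bser (bstar R) S)) (bG Q').
Proof. by move=> R S PR PS; apply: btr_in_P; apply: P_ser => //; apply: P_star. Qed.
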